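(* Under the standing assumptions below, let $S:V^*\to V$ be the solution operator of the variational inequality $w\in K$, $\langle Aw-z,v-w\rangle_V\ge0$ for all $v\in K$ (mapping $z\in V^*$ to $w$). Then for every $u\in V^*$ and every $G\in\partial_B^{sw}S(u)$, it holds $\langle z,Gz\rangle_V\ge0$ for all $z\in V^*$.
   Context: Standing assumptions: $(\Omega,\Sigma,\mu)$ is a complete finite measure space. $V$ is a real separable Hilbert space with $V\hookrightarrow L^2(\Omega)$ continuously, compactly and densely, and $[v]_{a_1}^{a_2}:=\min(a_2,\max(a_1,v))\in V$ for all $v\in V$, $a_1\le0\le a_2$ in $[-\infty,\infty]$. $A\in\mathcal{L}(V,V^* )$ is symmetric, satisfies $\langle Av,v\rangle_V\ge c\|v\|_V^2$ ($c>0$) and $\min(\langle Av,[v]_{a_1}^{a_2}\rangle_V,\langle A[v]_{a_1}^{a_2},v\rangle_V)\ge\langle A[v]_{a_1}^{a_2},[v]_{a_1}^{a_2}\rangle_V$ for all $v\in V$, $a_1\le0\le a_2$. $K\subset V$ is nonempty, closed, convex with $v\in K,z\in V\Rightarrow v+\max(0,z)\in K$ and $v_1,v_2\in K\Rightarrow\min(v_1,v_2)\in K$. The VI has a unique solution for each $z\in V^*$ and $S$ is globally Lipschitz. $S$ is Gâteaux differentiable at $u\in V^*$ if for all $z\in V^*$ the limit $S'(u;z):=\lim_{t\to0^+}(S(u+tz)-S(u))/t$ exists in $V$ and $z\mapsto S'(u;z)$ is linear and continuous; $\mathcal{D}_S$ is the set of such points. $\partial_B^{sw}S(u):=\{G\in\mathcal{L}(V^*,V):\exists\{u_n\}\subset\mathcal{D}_S,\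 u_n\to u\text{ in }V^*,\ S'(u_n)z\rightharpoonup Gz\text{ weakly in }V\ \forall z\in V^*\}$. *)

From HB Require Import structures.
From mathcomp Require Import all_boot all_order all_algebra.
From mathcomp Require Import all_classical all_reals all_analysis.
Set Implicit Arguments. Unset Strict Implicit. Unset Printing Implicit Defensive.
Import Order.TTheory GRing.Theory Num.Theory.
Import numFieldNormedType.Exports.
Local Open Scope classical_set_scope.
Local Open Scope ring_scope.

Section Defs.
Variable R : realType.

Definition is_inner_product (V : normedModType R) (ip : V -> V -> R) :=
  [/\ forall u v, ip u v = ip v u,
      forall a u v w, ip (a *: u + v) w = a * ip u w + ip v w &
      forall v, ip v v = `|v| ^+ 2].

Definition separable (V : normedModType R) :=
  exists D : set V, countable D /\ dense D.

(* elements of V' : continuous linear functionals on V, represented as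
   functions V -> R together with this predicate *)
Definition is_dual (V : normedModType R) (f : V -> R) :=
  (forall a u v, f (a *: u + v) = a * f u + f v) /\ continuous f.

Definition dadd (V : normedModType R) (f g : V -> R) : V -> R := fun v => f v + g v.
Definition dscale (V : normedModType R) (a : R) (f : V -> R) : V -> R :=
  fun v => a * f v.

Definition dual_norm (V : normedModType R) (f : V -> R) : R :=
  sup [set `|f v| | v in [set v : V | `|v| <= 1]].

Definition dual_cvg (V : normedModType R) (u_ : nat -> V -> R) (u : V -> R) :=
  (fun n => dual_norm (fun v => u_ n v - u v)) @ \oo --> (0 : R).

Definition weak_cvg (V : normedModType R) (x_ : nat -> V) (x : V) :=
  forall f : V -> R, is_dual f -> (fun n => f (x_ n)) @ \oo --> f x.

(* G : V' -> V belongs to L(V', V) (only its values on V' matter) *)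
Definition is_bounded_linear_dual_to (V : normedModType R) (G : (V -> R) -> V) :=
  (forall a z1 z2, is_dual z1 -> is_dual z2 ->
      G (dadd (dscale a z1) z2) = a *: G z1 + G z2) /\
  exists C : R, forall z, is_dual z -> `|G z| <= C * dual_norm z.

Definition is_bounded_linear_to_dual (V : normedModType R) (A : V -> V -> R) :=
  [/\ forall v, is_dual (A v),
      forall a u v x, A (a *: u + v) x = a * A u x + A v x &
      exists C : R, forall v, dual_norm (A v) <= C * `|v|].

Section L2.
Context d (T : measurableType d) (mu : {measure set T -> \bar R}).

Definition sq_integrable (f : T -> R) :=
  measurable_fun setT f /\ (\int[mu]_x (`|f x| ^+ 2)%:E < +oo)%E.

Definition l2dist (f g : T -> R) : R :=
  Num.sqrt (fine (\int[mu]_x (`|f x - g x| ^+ 2)%:E)).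

(* iota : V -> L^2(Omega), each iota v being a representative of its class;
   continuous, compact, dense, injective (on a.e.-classes) linear embedding *)
Definition L2_embedding (V : normedModType R) (iota : V -> T -> R) :=
  [/\ forall v, sq_integrable (iota v),
      forall a u v, {ae mu, forall x, iota (a *: u + v) x = a * iota u x + iota v x},
      forall v, {ae mu, forall x, iota v x = 0} -> v = 0,
      (exists C : R, forall v, l2dist (iota v) (fun=> 0) <= C * `|v|) &
      (forall v_ : nat -> V, (exists M : R, forall n, `|v_ n| <= M) ->
        exists (phi : nat -> nat) (f : T -> R),
          [/\ forall n m, (n < m)%N -> (phi n < phi m)%N, sq_integrable f &
          (fun n => l2dist (iota (v_ (phi n))) f) @ \oo --> (0 : R)]) /\
      (forall f, sq_integrable f -> forall e : R, 0 < e ->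
        exists v, l2dist (iota v) f < e)].

Definition clip (a1 a2 : \bar R) (r : R) : R :=
  fine (Order.min a2 (Order.max a1 r%:E)).

Definition is_trunc (V : normedModType R) (iota : V -> T -> R)
    (a1 a2 : \bar R) (v w : V) :=
  {ae mu, forall x, iota w x = clip a1 a2 (iota v x)}.

End L2.

Definition solves_VI (V : normedModType R) (A : V -> V -> R) (K : set V)
    (z : V -> R) (w : V) :=
  K w /\ forall v, K v -> 0 <= A w (v - w) - z (v - w).

Definition gateaux_deriv (V : normedModType R) (S : (V -> R) -> V)
    (u : V -> R) (Sd : (V -> R) -> V) :=
  (forall z, is_dual z ->
     (fun t : R => t^-1 *: (S (dadd u (dscale t z)) - S u)) @ 0^'+ --> Sd z) /\
  is_bounded_linear_dual_to Sd.

Definition bouligand_sw (V : normedModType R) (S : (V -> R) -> V)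
    (u : V -> R) (G : (V -> R) -> V) :=
  is_bounded_linear_dual_to G /\
  exists (u_ : nat -> V -> R) (Sd_ : nat -> (V -> R) -> V),
    [/\ forall n, is_dual (u_ n),
        forall n, gateaux_deriv S (u_ n) (Sd_ n),
        dual_cvg u_ u &
        forall z, is_dual z -> weak_cvg (fun n => Sd_ n z) (G z)].

End Defs.

From Pilot Require Import Defs.
From HB Require Import structures.
From mathcomp Require Import all_boot all_order all_algebra.
From mathcomp Require Import all_classical all_reals all_analysis.
From mathcomp Require Import ring lra.
Set Implicit Arguments. Unset Strict Implicit.
Import Order.TTheory GRing.Theory Num.Theory.
Import numFieldNormedType.Exports.
Local Open Scope classical_set_scope.
Local Open Scope ring_scope.

(* The solution operator S of a VI with a monotone A is monotone:
   testing the VI for z1 with S z2 and the VI for z2 with S z1 and adding gives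
   (z1 - z2)(S z1 - S z2) >= A(S z1 - S z2, S z1 - S z2) >= 0.
   Difference quotients of a monotone operator in a direction z therefore
   satisfy <z, (S(u + t z) - S u) / t> >= 0, so every Gateaux derivative
   S'(u) is monotone, and this inequality passes to weak limits of
   S'(u_n) z, i.e. to every element of the Bouligand subdifferential. *)

Section DualMonotone.
Variables (R : realType) (V : normedModType R).

Lemma dual0 (f : V -> R) : is_dual f -> f 0 = 0.
Proof. by move=> [lin _]; have := lin 1 0 0; rewrite scale1r addr0 mul1r; lra. Qed.

Lemma dualZ (f : V -> R) a x : is_dual f -> f (a *: x) = a * f x.
Proof. by move=> hf; have := hf.1 a x 0; rewrite !addr0 dual0 // addr0. Qed.

Lemma dualN (f : V -> R) x : is_dual f -> f (- x) = - f x.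
Proof. by move=> hf; rewrite -scaleN1r dualZ // mulN1r. Qed.

Lemma is_dual_dadd_dscale (u z : V -> R) (t : R) :
  is_dual u -> is_dual z -> is_dual (Defs.dadd u (Defs.dscale t z)).
Proof.
move=> [lu cu] [lz cz]; split.
  by move=> a x y; rewrite /Defs.dadd /Defs.dscale lu lz; ring.
move=> x; have ct : {for x, continuous (fun=> t : R)} by move=> ?; apply: cvg_cst.
exact: (@continuousD R R^o V u _ x (cu x) (@continuousM R V _ z x ct (cz x))).
Qed.

Definition monotone_dual_op (S : (V -> R) -> V) :=
  forall z1 z2, is_dual z1 -> is_dual z2 ->
    0 <= z1 (S z1 - S z2) - z2 (S z1 - S z2).

Lemma solves_VI_monotone (A : V -> V -> R) (K : set V)
    (z1 z2 : V -> R) (w1 w2 : V) :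
  (forall v, is_dual (A v)) ->
  (forall a u v x, A (a *: u + v) x = a * A u x + A v x) ->
  (forall v, 0 <= A v v) ->
  is_dual z1 -> is_dual z2 -> solves_VI A K z1 w1 -> solves_VI A K z2 w2 ->
  0 <= z1 (w1 - w2) - z2 (w1 - w2).
Proof.
move=> HAd HAl HApos h1 h2 [K1 VI1] [K2 VI2].
have := VI1 _ K2; have := VI2 _ K1; set e := w1 - w2.
have -> : w2 - w1 = - e by rewrite opprB.
rewrite !dualN //.
have : A e e = A w1 e - A w2 e.
  by rewrite /e -scaleN1r addrC HAl; ring.
have := HApos e; lra.
Qed.

Lemma gateaux_deriv_monotone (S : (V -> R) -> V) (u z : V -> R)
    (Sd : (V -> R) -> V) :
  monotone_dual_op S -> is_dual u -> is_dual z -> gateaux_deriv S u Sd ->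
  0 <= z (Sd z).
Proof.
move=> Smono hu hz [hd _].
have hq : (fun t : R => z (t^-1 *: (S (Defs.dadd u (Defs.dscale t z)) - S u))) @ 0^'+
    --> z (Sd z).
  exact: continuous_cvg (hz.2 _) (hd z hz).
apply: (closed_cvg [set x : R | 0 <= x] (@closed_ge _ 0) _ _ hq).
near=> t.
have t0 : 0 < t by near: t; exact: nbhs_right_gt.
have := Smono _ _ (is_dual_dadd_dscale t hu hz) hu.
rewrite /Defs.dadd /Defs.dscale addrAC subrr add0r pmulr_rge0 // => hzt.
by rewrite dualZ //; apply: mulr_ge0; rewrite // invr_ge0 ltW.
Unshelve. all: by end_near.
Qed.

Lemma bouligand_sw_monotone (S : (V -> R) -> V) (u z : V -> R)
    (G : (V -> R) -> V) :
  monotone_dual_op S -> bouligand_sw S u G -> is_dual z -> 0 <= z (G z).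
Proof.
move=> Smono [_ [u_ [Sd_ [hun hder _ hweak]]]] hz.
apply: (closed_cvg [set x : R | 0 <= x] (@closed_ge _ 0) _ _ (hweak z hz z hz)).
by near=> n; exact: gateaux_deriv_monotone Smono (hun n) hz (hder n).
Unshelve. all: by end_near.
Qed.

End DualMonotone.

Theorem mainTheorem15
  (R : realType) (d : measure_display) (Omega : measurableType d)
  (mu : {measure set Omega -> \bar R})
  (V : completeNormedModType R) (ip : V -> V -> R) (iota : V -> Omega -> R)
  (A : V -> V -> R) (K : set V) (S : (V -> R) -> V)
  (Hcomplete : measure_is_complete mu)
  (Hfinite : (mu setT < +oo)%E)
  (Hip : is_inner_product ip)
  (Hsep : separable V)
  (Hemb : L2_embedding mu iota)
  (Htrunc : forall (v : V) (a1 a2 : \bar R), (a1 <= 0 <= a2)%E ->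
     exists w : V, is_trunc mu iota a1 a2 v w)
  (HA : is_bounded_linear_to_dual A)
  (HAsym : forall u v, A u v = A v u)
  (HAcoer : exists c : R, 0 < c /\ forall v, c * `|v| ^+ 2 <= A v v)
  (HAtrunc : forall (v w : V) (a1 a2 : \bar R), (a1 <= 0 <= a2)%E ->
     is_trunc mu iota a1 a2 v w ->
     A w w <= Num.min (A v w) (A w v))
  (HK0 : K !=set0) (HKcl : closed K) (HKcvx : convex_set K)
  (HKmax : forall v z w, K v ->
     {ae mu, forall x, iota w x = Num.max 0 (iota z x)} -> K (v + w))
  (HKmin : forall v1 v2 w, K v1 -> K v2 ->
     {ae mu, forall x, iota w x = Num.min (iota v1 x) (iota v2 x)} -> K w)
  (HS : forall z, is_dual z -> solves_VI A K z (S z))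
  (HSuniq : forall z w, is_dual z -> solves_VI A K z w -> w = S z)
  (HSlip : exists L : R, forall z1 z2, is_dual z1 -> is_dual z2 ->
     `|S z1 - S z2| <= L * dual_norm (fun v => z1 v - z2 v)) :
  forall (u : V -> R) (G : (V -> R) -> V),
    is_dual u -> bouligand_sw S u G ->
    forall z, is_dual z -> 0 <= z (G z).
Proof.
(* Only linearity and coercivity of A enter. *)
move=> u G _ hG z hz.
have [HAd HAl _] := HA.
have [c [c0 Hc]] := HAcoer.
have HApos v : 0 <= A v v.
  by apply: le_trans (Hc v); rewrite mulr_ge0 // ?ltW // sqr_ge0.
have Smono : monotone_dual_op S.
  by move=> z1 z2 h1 h2; exact: solves_VI_monotone HAd HAl HApos h1 h2 (HS _ h1) (HS _ h2).
exact: bouligand_sw_monotone Smono hG hz.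
Qed.
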